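(* For $n\ge1$, choose a composition $X=(c_1,\dots,c_h)$ of $n$ uniformly at random among all $2^{n-1}$ compositions of $n$, and choose one of the $n$ unit elements uniformly at random, where the elements are arranged so that the first $c_1$ elements have rank 1, the next $c_2$ have rank 2, etc. Then the probability that the chosen element has rank $r$ is $\dfrac{1}{n\,2^{n-1}}\sum_{i=r}^n\binom{n}{i}$, and the expected rank is $(n+3)/4$.
   Context: A composition of $n$ is a sequence of positive integers $(c_1,\dots,c_h)$ with $c_1+\dots+c_h=n$. *)

From mathcomp Require Import all_boot all_order all_algebra.
Set Implicit Arguments. Unset Strict Implicit. Unset Printing Implicit Defensive.
Import Order.TTheory GRing.Theory Num.Theory.

Definition is_composition (n : nat) (X : seq nat) : bool :=
  all (fun c => 0 < c) X && (sumn X == n).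

Definition rank_seq (X : seq nat) : seq nat :=
  flatten [seq nseq c i.+1 | '(i, c) <- zip (iota 0 (size X)) X].

(* Rank of the j-th element (0-indexed, j < n). *)
Definition elt_rank (X : seq nat) (j : nat) : nat := nth 0 (rank_seq X) j.

Local Open Scope ring_scope.

(* Probability, when X is uniform in the list [comps] and the element j is
   uniform in {0,...,n-1}, that the chosen element has rank r. *)
Definition prob_rank (n : nat) (comps : seq (seq nat)) (r : nat) : rat :=
  (size comps)%:R^-1 *
  \sum_(X <- comps) (n%:R^-1 * \sum_(j < n) (elt_rank X j == r)%:R).

Definition expected_rank (n : nat) (comps : seq (seq nat)) : rat :=
  (size comps)%:R^-1 *
  \sum_(X <- comps) (n%:R^-1 * \sum_(j < n) (elt_rank X j)%:R).

From mathcomp Require Import all_boot all_order all_algebra.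
From mathcomp Require Import zify ring.

Set Implicit Arguments.
Unset Strict Implicit.
Unset Printing Implicit Defensive.
Import Order.TTheory GRing.Theory Num.Theory.

(* A composition of m.+1 is the same as a bit string b of length m, where bit i
   tells whether the i-th and (i+1)-th elements lie in different parts; the
   rank of element j.+1 is then 1 plus the number of cuts among the first j
   gaps.  Summing a statistic F of the ranks over all pairs (b, j) and
   splitting on the first bit gives
     S_(m+1)(F) = 2^(m+1) F(1) + S_m(F o succ) + S_m(F).
   For F = [_ == r] this is Pascal's rule for the tails sum_(i >= r) C(m+1, i)
   of binomial rows, and for F = id it is a linear recurrence solved by
   2^m (m+1)(m+4)/4. *)

Definition incr_head (s : seq nat) : seq nat :=
  if s is c :: s' then c.+1 :: s' else [:: 1].

Fixpoint comp_of_bits (b : bitseq) : seq nat :=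
  match b with
  | [::] => [:: 1]
  | true :: b' => 1 :: comp_of_bits b'
  | false :: b' => incr_head (comp_of_bits b')
  end.

Lemma comp_of_bits_shape b : exists c X, comp_of_bits b = c.+1 :: X.
Proof.
elim: b => [|[] b [c [X IHb]]] /=; first by exists 0, [::].
  by exists 0, (comp_of_bits b).
by rewrite IHb; exists c.+1, X.
Qed.

Lemma sumn_comp_of_bits b : sumn (comp_of_bits b) = (size b).+1.
Proof.
elim: b => [|[] b IHb] //=; first by rewrite IHb.
by have [c [X E]] := comp_of_bits_shape b; rewrite E /= in IHb *; rewrite addSn IHb.
Qed.

Lemma comp_of_bits_composition b : is_composition (size b).+1 (comp_of_bits b).
Proof.
rewrite /is_composition sumn_comp_of_bits eqxx andbT.
elim: b => [|[] b IHb] //=.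
by have [c [X E]] := comp_of_bits_shape b; rewrite E in IHb *.
Qed.

Lemma head_comp_of_bits_cons x b : (head 0 (comp_of_bits (x :: b)) == 1) = x.
Proof. by case: x => //=; have [c [X ->]] := comp_of_bits_shape b. Qed.

Lemma comp_of_bits_inj : injective comp_of_bits.
Proof.
have size_eq b1 b2 : comp_of_bits b1 = comp_of_bits b2 -> size b1 = size b2.
  by move/(congr1 sumn); rewrite !sumn_comp_of_bits => -[].
elim=> [|x b1 IHb] [|y b2] E //; have := size_eq _ _ E => //= -[sb].
have xy : x = y by rewrite -(head_comp_of_bits_cons x b1) E head_comp_of_bits_cons.
subst y; congr (_ :: _); apply: IHb; case: x E => /= [[]//|].
have [c [X ->]] := comp_of_bits_shape b1; have [d [Y ->]] := comp_of_bits_shape b2.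
by case=> -> ->.
Qed.

Lemma comp_of_bits_surj m X :
  is_composition m.+1 X -> exists2 b, size b = m & comp_of_bits b = X.
Proof.
elim: m X => [|m IHm] [|c X] //; rewrite /is_composition /=.
- case/andP=> /andP[c_gt0 X_pos] /eqP sumX.
  have [-> X0] : c = 1 /\ sumn X = 0 by lia.
  case: X X_pos X0 {sumX} => [|d X] /=; last by case/andP=> d_gt0 _; lia.
  by exists [::].
- case/andP=> /andP[c_gt0 X_pos] /eqP sumX.
  case: c c_gt0 sumX => [|[|c]] // _ sumX.
  + have [|b sb <-] := IHm X; first by rewrite /is_composition X_pos; apply/eqP; lia.
    by exists (true :: b); rewrite /= ?sb.
  + have [|b sb E] := IHm (c.+1 :: X).
      by rewrite /is_composition /= X_pos; apply/eqP; lia.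
    by exists (false :: b); rewrite /= ?sb ?E.
Qed.

Fixpoint bitseqs (m : nat) : seq bitseq :=
  if m is m'.+1 then map (cons true) (bitseqs m') ++ map (cons false) (bitseqs m')
  else [:: [::]].

Lemma size_bitseqs m : size (bitseqs m) = 2 ^ m.
Proof. by elim: m => //= m IHm; rewrite size_cat !size_map IHm expnS mul2n addnn. Qed.

Lemma cons_inj (T : Type) (x : T) : injective (cons x).
Proof. exact: (can_inj (g := behead)). Qed.

Lemma mem_bitseqs m b : (b \in bitseqs m) = (size b == m).
Proof.
elim: m b => [|m IHm] [|x b] //=; rewrite mem_cat.
  by apply/negP; case/orP=> /mapP[].
have notin y s : (y :: b \in map (cons (~~ y)) s) = false.
  by apply/mapP=> -[c _ [/eqP]]; case: y.
by case: x; rewrite (mem_map (@cons_inj _ _)) IHm ?(notin true) ?(notin false) ?orbF.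
Qed.

Lemma uniq_bitseqs m : uniq (bitseqs m).
Proof.
elim: m => //= m IHm; rewrite cat_uniq !map_inj_uniq ?IHm ?andbT //; try exact: cons_inj.
by apply/hasPn=> _ /mapP[b _ ->]; apply/mapP=> -[].
Qed.

Lemma perm_compositions_bitseqs m comps :
  uniq comps -> (forall X, (X \in comps) = is_composition m.+1 X) ->
  perm_eq comps (map comp_of_bits (bitseqs m)).
Proof.
move=> comps_uniq mem_comps; apply: uniq_perm => //.
  by rewrite map_inj_uniq ?uniq_bitseqs //; exact: comp_of_bits_inj.
move=> X; rewrite mem_comps; apply/idP/mapP.
  by case/comp_of_bits_surj=> b sb <-; exists b; rewrite // mem_bitseqs sb.
by case=> b; rewrite mem_bitseqs => /eqP <- ->; exact: comp_of_bits_composition.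
Qed.

Lemma rank_seq_cons c X : rank_seq (c :: X) = nseq c 1 ++ map succn (rank_seq X).
Proof.
rewrite /rank_seq /=; congr (_ ++ _); elim: X 0 => [|d X IHX] k //=.
by rewrite map_cat map_nseq IHX.
Qed.

Lemma size_rank_seq X : size (rank_seq X) = sumn X.
Proof.
by elim: X => [|c X IHX] //; rewrite rank_seq_cons size_cat size_nseq size_map IHX.
Qed.

Lemma elt_rank_comp_of_bits0 b : elt_rank (comp_of_bits b) 0 = 1.
Proof. by have [c [X ->]] := comp_of_bits_shape b; rewrite /elt_rank rank_seq_cons. Qed.

Lemma elt_rank_comp_of_bits_cons x b j : j <= size b ->
  elt_rank (comp_of_bits (x :: b)) j.+1 = x + elt_rank (comp_of_bits b) j.
Proof.
rewrite /elt_rank; case: x => j_le; rewrite [comp_of_bits _]/=.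
  by rewrite rank_seq_cons /= (nth_map 0) // size_rank_seq sumn_comp_of_bits.
by have [c [X ->]] := comp_of_bits_shape b; rewrite !rank_seq_cons.
Qed.

Definition rank_sum (m : nat) (F : nat -> nat) : nat :=
  \sum_(b <- bitseqs m) \sum_(j < m.+1) F (elt_rank (comp_of_bits b) j).

Lemma rank_sum0 F : rank_sum 0 F = F 1.
Proof. by rewrite /rank_sum big_seq1 big_ord1. Qed.

Lemma rank_sumS m F :
  rank_sum m.+1 F = 2 ^ m.+1 * F 1 + rank_sum m (F \o succn) + rank_sum m F.
Proof.
have split_first x :
    \sum_(b <- bitseqs m) \sum_(j < m.+2) F (elt_rank (comp_of_bits (x :: b)) j)
    = 2 ^ m * F 1 + rank_sum m (fun k => F (x + k)).
  have -> : 2 ^ m * F 1 = \sum_(b <- bitseqs m) F 1.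
    by rewrite big_const_seq count_predT size_bitseqs iter_addn_0 mulnC.
  rewrite -big_split; apply: eq_big_seq => b; rewrite mem_bitseqs => /eqP sb.
  rewrite big_ord_recl elt_rank_comp_of_bits0; congr (_ + _); apply: eq_bigr => j _.
  by rewrite lift0 elt_rank_comp_of_bits_cons // sb -ltnS.
rewrite {1}/rank_sum [bitseqs _]/= big_cat !big_map.
rewrite (split_first true) (split_first false) expnS /=.
change (rank_sum m (fun k => F (1 + k))) with (rank_sum m (F \o succn)).
change (rank_sum m (fun k => F (0 + k))) with (rank_sum m F).
lia.
Qed.

Lemma rank_sum_const m c : rank_sum m (fun=> c) = 2 ^ m * m.+1 * c.
Proof.
rewrite /rank_sum big_const_seq count_predT size_bitseqs iter_addn_0.
by rewrite sum_nat_const card_ord mulnC mulnA.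
Qed.

Lemma rank_sumD m F G :
  rank_sum m (fun k => F k + G k) = rank_sum m F + rank_sum m G.
Proof. by rewrite /rank_sum -big_split; apply: eq_bigr => b _; rewrite -big_split. Qed.

Definition binom_tail (N k : nat) : nat := \sum_(k <= i < N.+1) 'C(N, i).

Lemma binom_tail0 N : binom_tail N 0 = 2 ^ N.
Proof.
rewrite /binom_tail big_mkord -[2]/(1 + 1) expnDn.
by apply: eq_bigr => i _; rewrite !exp1n !muln1.
Qed.

Lemma binom_tailS N k : binom_tail N.+1 k.+1 = binom_tail N k + binom_tail N k.+1.
Proof.
rewrite /binom_tail; have [k_le|N_lt] := leqP k N; last by rewrite !big_geq //; lia.
rewrite big_add1 /=; under eq_bigr do rewrite binS.
rewrite big_split addnC /= -(big_add1 _ _ k N.+2 xpredT (fun i => 'C(N, i))).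
by rewrite big_nat_recr //= bin_small // addn0.
Qed.

Lemma rank_sum_eq0 m : rank_sum m (fun k => k == 0) = 0.
Proof.
elim: m => [|m IHm]; first by rewrite rank_sum0.
by rewrite rank_sumS IHm muln0 (rank_sum_const m 0) muln0.
Qed.

Lemma rank_sum_eq m r : rank_sum m (fun k => k == r.+1) = binom_tail m.+1 r.+1.
Proof.
elim: m r => [|m IHm] r.
  by rewrite rank_sum0 /binom_tail; case: r => [|r]; rewrite ?big_nat1 ?big_geq.
rewrite rank_sumS binom_tailS IHm.
change (rank_sum m (_ \o succn)) with (rank_sum m (fun k => k == r)).
case: r => [|r].
  by rewrite rank_sum_eq0 binom_tail0 eqxx muln1 addn0.
by rewrite IHm /= muln0.
Qed.

Lemma rank_sum_id m : 4 * rank_sum m id = 2 ^ m * (m.+1 * (m + 4)).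
Proof.
elim: m => [|m IHm]; first by rewrite rank_sum0.
rewrite rank_sumS (rank_sumD m (fun=> 1) id) rank_sum_const expnS.
by rewrite /=; nia.
Qed.

Local Open Scope ring_scope.

Lemma average_rank_stat m comps (F : nat -> nat) :
  uniq comps -> (forall X, (X \in comps) = is_composition m.+1 X) ->
  (size comps)%:R^-1 *
    \sum_(X <- comps) ((m.+1)%:R^-1 * \sum_(j < m.+1) (F (elt_rank X j))%:R)
  = ((m.+1)%:R * 2%:R ^+ m)^-1 * (rank_sum m F)%:R :> rat.
Proof.
move=> comps_uniq mem_comps.
have comps_perm := perm_compositions_bitseqs comps_uniq mem_comps.
rewrite (perm_size comps_perm) size_map size_bitseqs (perm_big _ comps_perm) big_map.
rewrite -big_distrr /= natrX invfM mulrA [_^-1 * _^-1]mulrC /rank_sum natr_sum.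
by congr (_ * _); apply: eq_bigr => b _; rewrite natr_sum.
Qed.

Theorem mainTheorem5 (n : nat) (comps : seq (seq nat)) :
  (1 <= n)%N ->
  uniq comps ->
  (forall X, (X \in comps) = is_composition n X) ->
  (forall r : nat, (1 <= r <= n)%N ->
     prob_rank n comps r =
       (n%:R * 2%:R ^+ n.-1)^-1 * (\sum_(r <= i < n.+1) 'C(n, i))%N%:R)
  /\ expected_rank n comps = (n%:R + 3%:R) / 4%:R.
Proof.
case: n => [|m] // _ comps_uniq mem_comps; split.
  case=> [|r] // _; rewrite /prob_rank.
  by rewrite (average_rank_stat (fun k => k == r.+1) comps_uniq mem_comps) rank_sum_eq.
rewrite /expected_rank (average_rank_stat id comps_uniq mem_comps).
have -> : (rank_sum m id)%:R = (2 ^ m * (m.+1 * (m + 4)))%:R / 4%:R :> rat.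
  by rewrite -rank_sum_id natrM mulrC mulKf // pnatr_eq0.
rewrite !natrM !natrD natrX; field.
by rewrite expf_neq0 ?pnatr_eq0 //= addrC natr1 pnatr_eq0.
Qed.
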